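(* Let $\mu$ be a probability measure on $\mathrm{Homeo}_+(\mathbb{R})$ with finite or countable support having the shiftability property. If there exist $x,y\in\mathbb{R}$ with $\phi_+(x)>0$ and $\phi_-(y)>0$, then $\phi_+(z)+\phi_-(z)=1$ for every $z\in\mathbb{R}$.
   Context: Setup. Let $\mu$ be a probability measure on the group $\mathrm{Homeo}_+(\mathbb{R})$ of orientation-preserving homeomorphisms of $\mathbb{R}$, supported on a finite or countable set $\{f_1,f_2,\dots\}$ with $p_i=\mu(\{f_i\})>0$, $\sum_i p_i=1$. Let $g_1,g_2,\dots$ be i.i.d. random maps with law $\mu$, and set $F_0=\mathrm{id}$, $F_n=g_n\circ\cdots\circ g_1$. For $x\in\mathbb{R}$ let $\phi_+(x)=\mathbb{P}(\lim_n F_n(x)=+\infty)$ and $\phi_-(x)=\mathbb{P}(\lim_n F_n(x)=-\infty)$. The system has the shiftability property if for every $x\in\mathbb{R}$ there exist $f,g$ with $\mu(\{f\})>0$, $\mu(\{g\})>0$ and $g(x)<x<f(x)$. *)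

From HB Require Import structures.
From mathcomp Require Import all_boot all_order all_algebra.
From mathcomp Require Import all_classical all_reals all_analysis.
Set Implicit Arguments. Unset Strict Implicit. Unset Printing Implicit Defensive.
Import Order.TTheory GRing.Theory Num.Theory numFieldNormedType.Exports.
Local Open Scope classical_set_scope.
Local Open Scope ring_scope.

Definition homeo_plus (R : realType) (f : R -> R) : Prop :=
  (exists g : R -> R, cancel f g /\ cancel g f /\ continuous (g : R -> R))
  /\ continuous (f : R -> R) /\ (forall x y : R, x < y -> f x < f y).

(* F_n = g_n o ... o g_1, with g_{k+1} = fs (xi k w) *)
Fixpoint Fcomp (R : realType) (I Omega : Type) (fs : I -> R -> R)
  (xi : nat -> Omega -> I) (n : nat) (w : Omega) (x : R) : R :=
  match n with
  | 0 => x
  | n'.+1 => fs (xi n' w) (Fcomp fs xi n' w x)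
  end.

(* xi_0, xi_1, ... are i.i.d. with P(xi_n = i) = p i: every finite-dimensional
   joint law is the product law. *)
Definition iid_law (R : realType) (d : measure_display) (Omega : measurableType d)
  (P : probability Omega R) (I : Type) (p : I -> R) (xi : nat -> Omega -> I) : Prop :=
  forall (n : nat) (s : nat -> I),
    P (\bigcap_(k in [set k | (k < n)%N]) (xi k @^-1` [set s k]))
    = (\prod_(k < n) p (s k))%:E.

Definition event_pinfty (R : realType) (I Omega : Type) (fs : I -> R -> R)
  (xi : nat -> Omega -> I) (x : R) : set Omega :=
  [set w | (fun n => Fcomp fs xi n w x) @ \oo --> +oo].

Definition event_ninfty (R : realType) (I Omega : Type) (fs : I -> R -> R)
  (xi : nat -> Omega -> I) (x : R) : set Omega :=
  [set w | (fun n => Fcomp fs xi n w x) @ \oo --> -oo].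

Definition shiftable (R : realType) (I : Type) (fs : I -> R -> R) : Prop :=
  forall x : R, exists i j : I, fs j x < x < fs i x.

From HB Require Import structures.
From mathcomp Require Import all_boot all_order all_algebra.
From mathcomp Require Import all_classical all_reals all_analysis.
From mathcomp Require Import lra.
Import Order.TTheory GRing.Theory Num.Theory numFieldNormedType.Exports.
Local Open Scope classical_set_scope.
Local Open Scope ring_scope.
Set Implicit Arguments. Unset Strict Implicit. Unset Printing Implicit Defensive.

(* A sample point is identified with the word xi_0 xi_1 ... of letters it draws; write
   A(x), B(x) for escape to +oo, -oo from x, and p(t) for the probability of a word t.
   1. Markov property: P(cylinder(t) ∩ A(x)) = p(t) P(A(F_t x)).  It is first proved for
      events determined by finitely many letters, then carried to A(x) through the
      monotone description A(x) = ∩_M ∪_N ∩_K [F_{N+j} x > M for j <= K].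
   2. Positivity: shiftability and continuity give a word carrying any point above any
      other (a supremum argument); as A(x) grows with x, P(A(x0)) > 0 spreads to all x.
   3. Uniform bound: c = min(P A(0), P B(0)) > 0 bounds P(A y) + P(B y) from below for
      every y, hence c P(U) <= P(U ∩ (A z ∪ B z)) for every finitely determined event U.
   4. Zero-one argument: A(z) and B(z) are approximable by finitely determined events,
      and an approximable event missing the fraction c of every such event is null.
   Escape to -oo is reduced to escape to +oo by conjugating the maps with x |-> -x. *)

Section Words.
Variables (R : realType) (I : Type) (fs : I -> R -> R).

Definition run (t : seq I) (y : R) : R := foldl (fun y i => fs i y) y t.

Lemma run_rcons t i y : run (rcons t i) y = fs i (run t y).
Proof. by rewrite /run foldl_rcons. Qed.

Variable Omega : Type.
Implicit Types (xi : nat -> Omega -> I) (w : Omega) (t s : seq I).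

Definition prefix xi n w : seq I := mkseq (fun k => xi k w) n.
Definition shift xi n : nat -> Omega -> I := fun k => xi (n + k)%N.

Lemma size_prefix xi n w : size (prefix xi n w) = n.
Proof. by rewrite size_mkseq. Qed.

Lemma Fcomp_prefix xi n w x : Fcomp fs xi n w x = run (prefix xi n w) x.
Proof. by elim: n => [//|n IH]; rewrite [LHS]/= IH /prefix mkseqS run_rcons. Qed.

Lemma Fcomp_shift xi n m w x :
  Fcomp fs xi (n + m) w x = Fcomp fs (shift xi n) m w (Fcomp fs xi n w x).
Proof. by elim: m => [|m IH]; rewrite ?addn0 // addnS /= IH. Qed.

Lemma prefix_add xi n m w :
  prefix xi (n + m) w = prefix xi n w ++ prefix (shift xi n) m w.
Proof.
rewrite /prefix /mkseq iotaD map_cat add0n; congr (_ ++ _).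
by rewrite -[X in iota X m]addn0 iotaDl -map_comp.
Qed.

Lemma take_prefix xi n m w : (n <= m)%N -> take n (prefix xi m w) = prefix xi n w.
Proof. by move=> nm; rewrite -(subnKC nm) prefix_add take_size_cat ?size_prefix. Qed.

Definition cylinder xi t : set Omega := [set w | prefix xi (size t) w = t].
Definition prefix_event xi n (S : set (seq I)) : set Omega := [set w | S (prefix xi n w)].

Lemma cylinder_nil xi : cylinder xi [::] = setT.
Proof. by apply/seteqP; split. Qed.

Lemma cylinder_cat xi t s :
  cylinder xi t `&` cylinder (shift xi (size t)) s = cylinder xi (t ++ s).
Proof.
apply/seteqP; split => w /=; rewrite /cylinder /= size_cat prefix_add; first by case=> -> ->.
move=> E; split; [move: (congr1 (take (size t)) E) | move: (congr1 (drop (size t)) E)];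
by rewrite ?take_size_cat ?drop_size_cat ?size_prefix.
Qed.

Lemma cylinderE xi a t :
  cylinder xi t = \bigcap_(k in [set k | (k < size t)%N]) (xi k @^-1` [set nth a t k]).
Proof.
apply/seteqP; split => w /=; first by move=> Hw k kt; rewrite -Hw /prefix nth_mkseq.
move=> Hw; apply: (@eq_from_nth _ a); first by rewrite size_prefix.
by move=> k; rewrite size_prefix => kt; rewrite /prefix nth_mkseq // Hw.
Qed.

End Words.

Section PrefixEvents.
Variables (I : countType) (d : measure_display) (Omega : measurableType d).
Implicit Types (xi : nat -> Omega -> I) (S : set (seq I)) (t : seq I).

Definition coord_measurable xi := forall k i, measurable (xi k @^-1` [set i]).

Lemma cylinder_measurable xi t : coord_measurable xi -> measurable (cylinder xi t).
Proof.
move=> xim; case: t => [|a t]; first by rewrite cylinder_nil.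
by rewrite (cylinderE _ a); apply: bigcap_measurableType => k _; exact: xim.
Qed.

(* The prefix event of S is the disjoint union of countably many pieces, indexed by the
   codes of the words of S; each piece is a cylinder or is empty. *)
Definition prefix_piece xi n S (k : nat) : set Omega :=
  prefix_event xi n (S `&` [set t | pickle_inv k = Some t]).

Lemma prefix_pieceP n S k :
  (exists s, forall xi, prefix_piece xi n S k = cylinder xi s) \/
  (forall xi, prefix_piece xi n S k = set0).
Proof.
case E: (pickle_inv k) => [s|]; last first.
  by right => xi; apply/seteqP; split => w //= [_]; rewrite E.
have [[Ss sn]|nS] := pselect (S s /\ size s = n).
  left; exists s => xi; apply/seteqP; split => w /=.
    by move=> [_]; rewrite E => -[->]; rewrite /cylinder size_prefix.
  by rewrite /cylinder /prefix_piece /prefix_event /= sn => ->; split.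
right => xi; apply/seteqP; split => w //= [Sw]; rewrite E => -[ws]; apply: nS.
by rewrite ws size_prefix.
Qed.

Lemma prefix_piece_measurable xi n S k :
  coord_measurable xi -> measurable (prefix_piece xi n S k).
Proof.
move=> xim; case: (prefix_pieceP n S k) => [[s ->]|->] //.
exact: cylinder_measurable.
Qed.

Lemma prefix_event_bigcup xi n S : prefix_event xi n S = \bigcup_k prefix_piece xi n S k.
Proof.
apply/seteqP; split => w /=; last by move=> [k _ [Sw _]].
by move=> Sw; exists (pickle (prefix xi n w)) => //; split => //=; rewrite pickleK_inv.
Qed.

Lemma prefix_piece_trivIset xi n S : trivIset setT (prefix_piece xi n S).
Proof.
move=> i j _ _ [w [[_ /= Hi] [_ /= Hj]]].
by rewrite -(@pickle_invK (seq I) i) -(@pickle_invK (seq I) j) Hi Hj.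
Qed.

Lemma prefix_event_measurable xi n S :
  coord_measurable xi -> measurable (prefix_event xi n S).
Proof.
move=> xim; rewrite prefix_event_bigcup; apply: bigcupT_measurable => k.
exact: prefix_piece_measurable.
Qed.

Lemma measure_prefix_event (R : realType) (P : probability Omega R)
    xi n S D : coord_measurable xi -> measurable D ->
  P (D `&` prefix_event xi n S) = (\sum_(k <oo) P (D `&` prefix_piece xi n S k))%E.
Proof.
move=> xim mD; have mDk k : measurable (D `&` prefix_piece xi n S k).
  by apply: measurableI => //; exact: prefix_piece_measurable.
rewrite prefix_event_bigcup setI_bigcupr measure_semi_bigcup //.
- by apply: trivIset_setIl; exact: prefix_piece_trivIset.
- exact: bigcupT_measurable.
Qed.

End PrefixEvents.

Section Iid.
Variables (R : realType) (I : countType) (p : I -> R).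
Variables (d : measure_display) (Omega : measurableType d) (P : probability Omega R).
Variable xi : nat -> Omega -> I.
Hypothesis xim : coord_measurable xi.
Hypothesis iid : iid_law P p xi.
Implicit Types (S : set (seq I)) (t : seq I).

Definition weight t : R := \prod_(i <- t) p i.

Lemma weight_cat t s : weight (t ++ s) = weight t * weight s.
Proof. exact: big_cat. Qed.

Lemma measure_cylinder t : P (cylinder xi t) = (weight t)%:E.
Proof.
case: t => [|a t]; first by rewrite cylinder_nil probability_setT /weight big_nil.
by rewrite (cylinderE _ a) iid /weight (big_nth a) big_mkord.
Qed.

Lemma coord_measurable_shift n : coord_measurable (shift xi n).
Proof. by move=> k i; exact: xim. Qed.

Lemma markov_prefix_event t m S :
  P (cylinder xi t `&` prefix_event (shift xi (size t)) m S) =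
  ((weight t)%:E * P (prefix_event xi m S))%E.
Proof.
have mC := cylinder_measurable t xim.
rewrite measure_prefix_event //; last exact: coord_measurable_shift.
rewrite -[prefix_event xi m S]setTI measure_prefix_event // -nneseriesZl //.
apply: eq_eseriesr => k _; rewrite setTI.
case: (prefix_pieceP Omega m S k) => [[s E]|E]; rewrite !E; last by rewrite setI0 measure0 mule0.
by rewrite cylinder_cat !measure_cylinder weight_cat EFinM.
Qed.

End Iid.

Section MonotoneLimits.
Variables (R : realType) (d : measure_display) (Omega : measurableType d).
Variable P : probability Omega R.

Lemma measure_bigcup_proportional (C : set Omega) (c : R) (F G : nat -> set Omega) :
  measurable C -> (forall k, measurable (F k)) -> (forall k, measurable (G k)) ->
  {homo F : n m / (n <= m)%N >-> n `<=` m} -> {homo G : n m / (n <= m)%N >-> n `<=` m} ->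
  (forall k, P (C `&` F k) = (c%:E * P (G k))%E) ->
  P (C `&` \bigcup_k F k) = (c%:E * P (\bigcup_k G k))%E.
Proof.
move=> mC mF mG incF incG E; rewrite setI_bigcupr.
have mCF k : measurable (C `&` F k) by exact: measurableI.
have lim_CF : (P \o (fun k => C `&` F k)) @ \oo --> P (\bigcup_k (C `&` F k)).
  apply: nondecreasing_cvg_mu => //; first exact: bigcupT_measurable.
  by move=> n m nm; rewrite subsetEset; apply: setIS; exact: incF.
have lim_G : (P \o G) @ \oo --> P (\bigcup_k G k).
  apply: nondecreasing_cvg_mu => //; first exact: bigcupT_measurable.
  by move=> n m nm; rewrite subsetEset; exact: incG.
apply: (@cvg_unique _ (@ereal_hausdorff R) _ _ _ _ lim_CF); rewrite (_ : P \o _ = (fun k => c%:E * P (G k))%E).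
  exact: cvgeZl.
by apply: funext => k; exact: E.
Qed.

Lemma measure_bigcap_proportional (C : set Omega) (c : R) (F G : nat -> set Omega) :
  measurable C -> (forall k, measurable (F k)) -> (forall k, measurable (G k)) ->
  {homo F : n m / (n <= m)%N >-> m `<=` n} -> {homo G : n m / (n <= m)%N >-> m `<=` n} ->
  (forall k, P (C `&` F k) = (c%:E * P (G k))%E) ->
  P (C `&` \bigcap_k F k) = (c%:E * P (\bigcap_k G k))%E.
Proof.
move=> mC mF mG decF decG E; rewrite -bigcapIr; last by exists 0%N.
have mCF k : measurable (C `&` F k) by exact: measurableI.
have finP A : measurable A -> (P A < +oo)%E.
  by move=> mA; rewrite (le_lt_trans (probability_le1 _ mA)) ?ltry.
have lim_CF : (P \o (fun k => C `&` F k)) @ \oo --> P (\bigcap_k (C `&` F k)).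
  apply: nonincreasing_cvg_mu => //; [exact: finP | exact: bigcapT_measurable |].
  by move=> n m nm; rewrite subsetEset; apply: setIS; exact: decF.
have lim_G : (P \o G) @ \oo --> P (\bigcap_k G k).
  apply: nonincreasing_cvg_mu => //; [exact: finP | exact: bigcapT_measurable |].
  by move=> n m nm; rewrite subsetEset; exact: decG.
apply: (@cvg_unique _ (@ereal_hausdorff R) _ _ _ _ lim_CF); rewrite (_ : P \o _ = (fun k => c%:E * P (G k))%E).
  exact: cvgeZl.
by apply: funext => k; exact: E.
Qed.

End MonotoneLimits.

Section EscapeEvents.
Variables (R : realType) (I : Type) (fs : I -> R -> R) (Omega : Type).
Implicit Types (xi : nat -> Omega -> I) (M N K : nat).

Lemma event_pinftyP xi x w : event_pinfty fs xi x w <->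
  forall M : nat, exists N, forall j, M%:R < Fcomp fs xi (N + j) w x.
Proof.
rewrite /event_pinfty /= cvgryPgt; split.
  move=> H M; have [N _ HN] := H M%:R; exists N => j; apply: HN => /=; exact: leq_addr.
move=> H A; have [N HN] := H (Num.bound `|A|); exists N => // n /= Nn.
rewrite -(subnKC Nn); apply: le_lt_trans (HN _).
by rewrite ltW // (le_lt_trans (ler_norm A)) // archi_boundP.
Qed.

(* The orbit of x exceeds M at all times in [N, N + K]: an event determined by the first
   N + K letters.  Escape to +oo is a countable combination of these events. *)
Definition stays_above xi x M N K : set Omega :=
  prefix_event xi (N + K) [set t | forall j, (j <= K)%N -> M%:R < run fs (take (N + j) t) x].
Definition above_from xi x M N : set Omega := \bigcap_K stays_above xi x M N K.
Definition eventually_above xi x M : set Omega := \bigcup_N above_from xi x M N.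

Lemma stays_aboveE xi x M N K w : stays_above xi x M N K w <->
  forall j, (j <= K)%N -> M%:R < Fcomp fs xi (N + j) w x.
Proof.
rewrite /stays_above /prefix_event /=.
by split => H j jK; have := H j jK; rewrite take_prefix ?leq_add2l // Fcomp_prefix.
Qed.

Lemma event_pinfty_eventually_above xi x :
  event_pinfty fs xi x = \bigcap_M eventually_above xi x M.
Proof.
apply/seteqP; split => w.
  move/event_pinftyP => H M _; have [N HN] := H M; exists N => // K _.
  by apply/stays_aboveE => j _; exact: HN.
move=> H; apply/event_pinftyP => M; have [N _ HN] := H M Logic.I; exists N => j.
by have /stays_aboveE := HN j Logic.I; apply.
Qed.

Lemma stays_above_dec xi x M N : {homo stays_above xi x M N : K K' / (K <= K')%N >-> K' `<=` K}.
Proof.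
move=> K K' KK w /stays_aboveE H; apply/stays_aboveE => j jK; apply: H.
exact: leq_trans KK.
Qed.

Lemma above_from_inc xi x M : {homo above_from xi x M : N N' / (N <= N')%N >-> N `<=` N'}.
Proof.
move=> N N' NN w H K _; apply/stays_aboveE => j _.
have /stays_aboveE := H (N' - N + j)%N Logic.I.
by move/(_ (N' - N + j)%N (leqnn _)); rewrite addnA subnKC.
Qed.

Lemma eventually_above_dec xi x : {homo eventually_above xi x : M M' / (M <= M')%N >-> M' `<=` M}.
Proof.
move=> M M' MM w [N _ H]; exists N => // K _; apply/stays_aboveE => j jK.
have /stays_aboveE := H K Logic.I; move/(_ j jK); apply: le_lt_trans.
by rewrite ler_nat.
Qed.

End EscapeEvents.

Lemma event_pinfty_measurable (R : realType) (I : countType) (fs : I -> R -> R)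
    (d : measure_display) (Omega : measurableType d) (xi : nat -> Omega -> I) x :
  coord_measurable xi -> measurable (event_pinfty fs xi x).
Proof.
move=> xim; rewrite event_pinfty_eventually_above; apply: bigcapT_measurable => M.
apply: bigcupT_measurable => N; apply: bigcapT_measurable => K.
exact: prefix_event_measurable.
Qed.

Section MarkovEscape.
Variables (R : realType) (I : countType) (fs : I -> R -> R) (p : I -> R).
Variables (d : measure_display) (Omega : measurableType d) (P : probability Omega R).
Variable xi : nat -> Omega -> I.
Hypothesis xim : coord_measurable xi.
Hypothesis iid : iid_law P p xi.

(* Markov property for escape: pass from events determined by finitely many letters to
   escape to +oo through its monotone description. *)
Lemma markov_event_pinfty t y :
  P (cylinder xi t `&` event_pinfty fs (shift xi (size t)) y) =
  ((weight p t)%:E * P (event_pinfty fs xi y))%E.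
Proof.
have xim' := coord_measurable_shift xim (size t).
have mC := cylinder_measurable t xim.
have m_above_from xi' M N : coord_measurable xi' -> measurable (above_from fs xi' y M N).
  by move=> m'; apply: bigcapT_measurable => K; exact: prefix_event_measurable.
have m_eventually xi' M : coord_measurable xi' -> measurable (eventually_above fs xi' y M).
  by move=> m'; apply: bigcupT_measurable => N; exact: m_above_from.
rewrite !event_pinfty_eventually_above; apply: measure_bigcap_proportional.
- exact: mC.
- by move=> M; exact: m_eventually.
- by move=> M; exact: m_eventually.
- exact: eventually_above_dec.
- exact: eventually_above_dec.
move=> M; apply: measure_bigcup_proportional.
- exact: mC.
- by move=> N; exact: m_above_from.
- by move=> N; exact: m_above_from.
- exact: above_from_inc.
- exact: above_from_inc.
move=> N; apply: measure_bigcap_proportional.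
- exact: mC.
- by move=> K; exact: prefix_event_measurable.
- by move=> K; exact: prefix_event_measurable.
- exact: stays_above_dec.
- exact: stays_above_dec.
by move=> K; exact: (markov_prefix_event xim iid).
Qed.

End MarkovEscape.

Section OrbitMonotonicity.
Variables (R : realType) (I : Type) (fs : I -> R -> R) (Omega : Type).
Implicit Types (xi : nat -> Omega -> I).

Lemma cylinder_event_pinfty xi t x :
  cylinder xi t `&` event_pinfty fs xi x =
  cylinder xi t `&` event_pinfty fs (shift xi (size t)) (run fs t x).
Proof.
have restart w m : cylinder xi t w ->
    Fcomp fs xi (size t + m) w x = Fcomp fs (shift xi (size t)) m w (run fs t x).
  by move=> Cw; rewrite Fcomp_shift [Fcomp fs xi _ w x]Fcomp_prefix Cw.
apply/seteqP; split => w [Cw H]; split => //; move: H; rewrite !event_pinftyP.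
  by move=> H M; have [N HN] := H M; exists N => j; rewrite -restart // addnCA; exact: HN.
move=> H M; have [N HN] := H M; exists (N + size t)%N => j.
by rewrite -addnA addnCA restart.
Qed.

Hypothesis fs_mono : forall i, {homo fs i : a b / a <= b}.

Lemma Fcomp_mono xi n w x x' : x <= x' -> Fcomp fs xi n w x <= Fcomp fs xi n w x'.
Proof. by move=> xx; elim: n => //= n IH; exact: fs_mono. Qed.

Lemma event_pinfty_mono xi x x' : x <= x' -> event_pinfty fs xi x `<=` event_pinfty fs xi x'.
Proof.
move=> xx w; rewrite !event_pinftyP => H M; have [N HN] := H M; exists N => j.
by apply: lt_le_trans (HN j) _; exact: Fcomp_mono.
Qed.

End OrbitMonotonicity.

Section Mirror.
Variables (R : realType) (I : Type) (fs : I -> R -> R).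

(* Conjugation by x |-> -x exchanges escape to +oo and escape to -oo. *)
Definition mirror : I -> R -> R := fun i y => - fs i (- y).

Lemma Fcomp_mirror (Omega : Type) (xi : nat -> Omega -> I) n w x :
  Fcomp mirror xi n w x = - Fcomp fs xi n w (- x).
Proof. by elim: n => [|n IH] /=; rewrite ?opprK // /mirror IH opprK. Qed.

Lemma run_mirror t x : run mirror t (- x) = - run fs t x.
Proof. by elim/last_ind: t => [//|t i IH]; rewrite !run_rcons IH /mirror opprK. Qed.

Lemma event_ninfty_mirror (Omega : Type) (xi : nat -> Omega -> I) x :
  event_ninfty fs xi x = event_pinfty mirror xi (- x).
Proof.
have E w : (fun n => Fcomp mirror xi n w (- x)) = - (fun n => Fcomp fs xi n w x).
  by apply: funext => n; rewrite Fcomp_mirror opprK.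
by apply/seteqP; split => w; rewrite /event_pinfty /event_ninfty /= E => /cvgNry.
Qed.

Lemma mirror_mono : (forall i, {homo fs i : a b / a <= b}) ->
  forall i, {homo mirror i : a b / a <= b}.
Proof. by move=> h i a b ab; rewrite /mirror lerN2; apply: h; rewrite lerN2. Qed.

Lemma mirror_continuous : (forall i, continuous (fs i)) -> forall i, continuous (mirror i).
Proof.
move=> h i y; rewrite (_ : mirror i = -%R \o (fs i \o -%R)) //.
by apply: continuous_comp; [apply: continuous_comp; [exact: oppr_continuous|exact: h]|
  exact: oppr_continuous].
Qed.

Lemma shiftable_mirror : shiftable fs -> shiftable mirror.
Proof.
move=> shf x; have [i [j /andP[lo hi]]] := shf (- x).
by exists j, i; rewrite /mirror ltrNl ltrNr lo hi.
Qed.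

End Mirror.

Section Reach.
Variables (R : realType) (I : Type) (fs : I -> R -> R).
Hypothesis fs_cont : forall i, continuous (fs i).
Hypothesis shf : shiftable fs.

(* Otherwise the set of points reachable from z is
   bounded by x0; a map pushing its supremum s strictly up pushes, by continuity, a
   reachable point close to s above s. *)
Lemma run_reaches z x0 : exists t, x0 <= run fs t z.
Proof.
apply: contrapT => /forallNP unreached.
have below t : run fs t z < x0 by rewrite ltNge; apply/negP; exact: unreached.
pose E := [set y | exists t, y = run fs t z].
have supE : has_sup E.
  by split; [exists z, [::] | exists x0 => y [t ->]; exact/ltW/below].
have [i [_ /andP[_ up]]] := shf (sup E).
have near_up := cvgr_gt _ (@fs_cont i (sup E)) _ up.
have [e /= e0 near_s] := (nbhs_ballP (sup E) _).1 (near_up _).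
have [_ [t ->] close] := sup_adherent e0 supE.
have le_s : run fs t z <= sup E by apply: sup_upper_bound => //; exists t.
have : sup E < run fs (rcons t i) z.
  rewrite run_rcons; apply: near_s; rewrite -ball_normE /ball_ /= ger0_norm ?subr_ge0 //.
  by rewrite ltrBlDr addrC -ltrBlDr.
by rewrite ltNge sup_upper_bound //; exists (rcons t i).
Qed.

End Reach.

Section Positivity.
Variables (R : realType) (I : countType) (fs : I -> R -> R) (p : I -> R).
Variables (d : measure_display) (Omega : measurableType d) (P : probability Omega R).
Variable xi : nat -> Omega -> I.
Hypothesis xim : coord_measurable xi.
Hypothesis iid : iid_law P p xi.
Hypothesis p_gt0 : forall i, 0 < p i.

Lemma weight_gt0 t : 0 < weight p t.
Proof. exact: prodr_gt0. Qed.

Lemma markov_cylinder t x :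
  P (cylinder xi t `&` event_pinfty fs xi x) =
  ((weight p t)%:E * P (event_pinfty fs xi (run fs t x)))%E.
Proof. by rewrite cylinder_event_pinfty (markov_event_pinfty _ xim iid). Qed.

Hypothesis fs_mono : forall i, {homo fs i : a b / a <= b}.
Hypothesis fs_cont : forall i, continuous (fs i).
Hypothesis shf : shiftable fs.

(* Escape to +oo with positive probability from one point implies it from every point:
   first follow a word carrying z above that point, which has positive probability. *)
Lemma pinfty_pos_everywhere x0 : (0 < P (event_pinfty fs xi x0))%E ->
  forall z, (0 < P (event_pinfty fs xi z))%E.
Proof.
move=> pos0 z; have [t reach] := run_reaches fs_cont shf z x0.
have mA y : measurable (event_pinfty fs xi y) by exact: event_pinfty_measurable.
apply: (@lt_le_trans _ _ (P (cylinder xi t `&` event_pinfty fs xi z))); last first.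
  exact: (measureIr _ (cylinder_measurable t xim) (mA z)).
rewrite markov_cylinder; apply: mule_gt0; first by rewrite lte_fin weight_gt0.
apply: (lt_le_trans pos0); apply: le_measure; rewrite ?inE //.
exact: event_pinfty_mono.
Qed.

End Positivity.

Section Approximation.
Variables (R : realType) (I : countType).
Variables (d : measure_display) (Omega : measurableType d) (P : probability Omega R).
Variable xi : nat -> Omega -> I.
Hypothesis xim : coord_measurable xi.
Implicit Types (A B G : set Omega) (S : set (seq I)).

Definition Pr A : R := fine (P A).

Lemma PrE A : measurable A -> P A = (Pr A)%:E.
Proof. by move=> mA; rewrite /Pr fineK // fin_num_measure. Qed.

Lemma Pr_ge0 A : 0 <= Pr A.
Proof. exact: fine_ge0. Qed.

Lemma Pr_le A B : measurable A -> measurable B -> A `<=` B -> Pr A <= Pr B.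
Proof. by move=> mA mB AB; rewrite -lee_fin -!PrE //; apply: le_measure; rewrite ?inE. Qed.

Lemma Pr_setU A B : measurable A -> measurable B -> Pr (A `|` B) <= Pr A + Pr B.
Proof.
move=> mA mB; rewrite -lee_fin EFinD -!PrE //; last exact: measurableU.
exact: measureU2.
Qed.

Lemma Pr_cover A B G : measurable A -> measurable B -> measurable G ->
  G `<=` A `|` B -> Pr G <= Pr A + Pr B.
Proof.
move=> mA mB mG GAB; apply: le_trans (Pr_setU mA mB).
by apply: Pr_le => //; exact: measurableU.
Qed.

Definition approximable G := measurable G /\ forall e, 0 < e ->
  exists n S, Pr (G `\` prefix_event xi n S) + Pr (prefix_event xi n S `\` G) < e.

Lemma prefix_event_widen n m S :
  prefix_event xi n S = prefix_event xi (n + m) [set t | S (take n t)].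
Proof.
by apply/seteqP; split => w; rewrite /prefix_event /= take_prefix ?leq_addr.
Qed.

Lemma approximable_prefix_event n S : approximable (prefix_event xi n S).
Proof.
split; first exact: prefix_event_measurable.
by move=> e e0; exists n, S; rewrite !setDv /Pr measure0 addr0.
Qed.

Lemma approximableC G : approximable G -> approximable (~` G).
Proof.
move=> [mG aG]; split; first exact: measurableC.
move=> e e0; have [n [S small]] := aG e e0; exists n, (~` S).
rewrite (_ : prefix_event xi n (~` S) = ~` prefix_event xi n S) //.
by rewrite !setDE !setCK setIC addrC [_ `&` G]setIC.
Qed.

Lemma approximableU G1 G2 : approximable G1 -> approximable G2 -> approximable (G1 `|` G2).
Proof.
move=> [m1 a1] [m2 a2]; split; first exact: measurableU.
move=> e e0; have e2 : 0 < e / 2 by rewrite divr_gt0.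
have [n1 [S1 small1]] := a1 _ e2; have [n2 [S2 small2]] := a2 _ e2.
rewrite (prefix_event_widen n1 n2) in small1.
rewrite (prefix_event_widen n2 n1) addnC in small2.
set U1 := prefix_event xi (n1 + n2) _ in small1.
set U2 := prefix_event xi (n1 + n2) _ in small2.
exists (n1 + n2)%N, ([set t | S1 (take n1 t)] `|` [set t | S2 (take n2 t)]).
rewrite (_ : prefix_event _ _ _ = U1 `|` U2) //.
have mU1 : measurable U1 by exact: prefix_event_measurable.
have mU2 : measurable U2 by exact: prefix_event_measurable.
have out : Pr ((G1 `|` G2) `\` (U1 `|` U2)) <= Pr (G1 `\` U1) + Pr (G2 `\` U2).
  apply: Pr_cover; [exact: measurableD.. | apply: measurableD; exact: measurableU |].
  by move=> w [[?|?] /not_orP[? ?]]; [left|right].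
have extra : Pr ((U1 `|` U2) `\` (G1 `|` G2)) <= Pr (U1 `\` G1) + Pr (U2 `\` G2).
  apply: Pr_cover; [exact: measurableD.. | apply: measurableD; exact: measurableU |].
  by move=> w [[?|?] /not_orP[? ?]]; [left|right].
apply: le_lt_trans (lerD out extra) _.
by rewrite (splitr e) addrACA; exact: ltrD.
Qed.

(* Countable unions: a finite union already captures most of the probability. *)
Lemma approximable_bigcup (G : nat -> set Omega) :
  (forall k, approximable (G k)) -> approximable (\bigcup_k G k).
Proof.
move=> aG; have mG k : measurable (G k) := (aG k).1.
have mU : measurable (\bigcup_k G k) by exact: bigcupT_measurable.
split => // e e0; have e2 : 0 < e / 2 by rewrite divr_gt0.
pose H K := \big[setU/set0]_(i < K.+1) G i.
have aH K : approximable (H K).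
  elim: K => [|K IH]; last by rewrite /H big_ord_recr /=; exact: approximableU.
  by rewrite /H big_ord_recr big_ord0 /= set0U.
have mH K : measurable (H K) := (aH K).1.
have HG K : H K `<=` \bigcup_k G k.
  by move=> w; rewrite /H -bigcup_mkord => -[i _ Hi]; exists i.
have lim_H : (P \o H) @ \oo --> P (\bigcup_k G k).
  rewrite -bigcup_bigsetU_bigcup; apply: nondecreasing_cvg_mu => //.
  - by rewrite bigcup_bigsetU_bigcup.
  - by move=> n m nm; rewrite subsetEset; apply: subset_bigsetU.
rewrite (PrE mU) in lim_H; have [_ /= lim_H'] := (fine_cvgP _ _).1 lim_H.
have below : Pr (\bigcup_k G k) - e / 2 < Pr (\bigcup_k G k) by rewrite ltrBlDr ltrDl.
have [N _ HN] := cvgr_gt _ lim_H' _ below.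
have {}HN := HN N (leqnn N); rewrite /= -/(Pr (H N)) in HN.
have [n [S small]] := (aH N).2 _ e2.
have mL : measurable (prefix_event xi n S) by exact: prefix_event_measurable.
exists n, S.
have tail : Pr (\bigcup_k G k `\` H N) < e / 2.
  have : P (\bigcup_k G k) = (P (\bigcup_k G k `\` H N) + P (\bigcup_k G k `&` H N))%E.
    exact: measureDI.
  rewrite setIidr // !PrE //; last exact: measurableD.
  by rewrite -EFinD => -[E]; rewrite E in HN; lra.
have out : Pr (\bigcup_k G k `\` prefix_event xi n S) <=
    Pr (\bigcup_k G k `\` H N) + Pr (H N `\` prefix_event xi n S).
  apply: Pr_cover; do ?exact: measurableD.
  by move=> w [Gw Lw]; have [hw|hw] := pselect (H N w); [right|left].
have extra : Pr (prefix_event xi n S `\` \bigcup_k G k) <= Pr (prefix_event xi n S `\` H N).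
  by apply: Pr_le; do ?exact: measurableD; move=> w [Lw nG]; split => // /HG.
apply: le_lt_trans (lerD out extra) _; lra.
Qed.

Lemma approximable_bigcap (G : nat -> set Omega) :
  (forall k, approximable (G k)) -> approximable (\bigcap_k G k).
Proof.
move=> aG; rewrite -[X in approximable X]setCK setC_bigcap; apply: approximableC.
by apply: approximable_bigcup => k; exact: approximableC.
Qed.

(* An approximable event G occupying at most the fraction 1 - c of every event determined
   by finitely many letters is null: approximating G by such an event U gives
   c P(G) <= P(G \ U) + P(U \ G), which can be made smaller than c P(G). *)
Lemma approximable_null G c : approximable G -> 0 < c <= 1 ->
  (forall n S, c * Pr (prefix_event xi n S) <= Pr (prefix_event xi n S `\` G)) ->
  Pr G = 0.
Proof.
move=> [mG aG] /andP[c0 c1] sparse; apply/eqP; rewrite eq_le Pr_ge0 andbT leNgt.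
apply/negP => G0; have [n [S small]] := aG _ (mulr_gt0 c0 G0).
set U := prefix_event xi n S in small.
have mU : measurable U by exact: prefix_event_measurable.
have cover : Pr G <= Pr (G `\` U) + Pr U.
  apply: Pr_cover => //; first exact: measurableD.
  by move=> w Gw; have [Uw|Uw] := pselect (U w); [right|left].
have := sparse n S; rewrite -/U => inside.
have := Pr_ge0 (G `\` U); have := Pr_ge0 (U `\` G); nra.
Qed.

End Approximation.

Lemma approximable_event_pinfty (R : realType) (I : countType) (fs : I -> R -> R)
    (d : measure_display) (Omega : measurableType d) (P : probability Omega R)
    (xi : nat -> Omega -> I) x :
  coord_measurable xi -> approximable P xi (event_pinfty fs xi x).
Proof.
move=> xim; rewrite event_pinfty_eventually_above.
apply: (approximable_bigcap xim) => M; apply: (approximable_bigcup xim) => N.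
by apply: (approximable_bigcap xim) => K; exact: approximable_prefix_event.
Qed.

Lemma event_pinfty_ninfty_disjoint (R : realType) (I Omega : Type) (fs : I -> R -> R)
    (xi : nat -> Omega -> I) x :
  event_pinfty fs xi x `&` event_ninfty fs xi x = set0.
Proof.
apply/seteqP; split => w // []; rewrite event_ninfty_mirror !event_pinftyP => up down.
have [N1 HN1] := up 0%N; have [N2 HN2] := down 0%N.
by have := HN1 N2; have := HN2 N1; rewrite Fcomp_mirror opprK addnC; lra.
Qed.

Section Dichotomy.
Variables (R : realType) (I : countType) (fs : I -> R -> R) (p : I -> R).
Variables (d : measure_display) (Omega : measurableType d) (P : probability Omega R).
Variable xi : nat -> Omega -> I.
Hypothesis xim : coord_measurable xi.
Hypothesis iid : iid_law P p xi.
Hypothesis p_gt0 : forall i, 0 < p i.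
Hypothesis fs_mono : forall i, {homo fs i : a b / a <= b}.
Hypothesis fs_cont : forall i, continuous (fs i).
Hypothesis shf : shiftable fs.
Hypothesis pinfty_pos : exists x, (0 < P (event_pinfty fs xi x))%E.
Hypothesis ninfty_pos : exists y, (0 < P (event_ninfty fs xi y))%E.

Local Notation A y := (event_pinfty fs xi y).
Local Notation B y := (event_ninfty fs xi y).

Lemma measurable_A y : measurable (A y).
Proof. exact: event_pinfty_measurable. Qed.

Lemma measurable_B y : measurable (B y).
Proof. rewrite event_ninfty_mirror; exact: event_pinfty_measurable. Qed.

Lemma measurable_AB y : measurable (A y `|` B y).
Proof. exact: measurableU (measurable_A y) (measurable_B y). Qed.

Lemma measure_AB y : P (A y `|` B y) = (P (A y) + P (B y))%E.
Proof.
apply: measureU; [exact: measurable_A | exact: measurable_B |].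
exact: event_pinfty_ninfty_disjoint.
Qed.

Lemma A_pos z : (0 < P (A z))%E.
Proof.
have [x pos] := pinfty_pos.
exact: (pinfty_pos_everywhere xim iid p_gt0 fs_mono fs_cont shf pos).
Qed.

Lemma B_pos z : (0 < P (B z))%E.
Proof.
have [y] := ninfty_pos; rewrite !event_ninfty_mirror => pos.
exact: (pinfty_pos_everywhere xim iid p_gt0 (mirror_mono fs_mono)
  (mirror_continuous fs_cont) (shiftable_mirror shf) pos).
Qed.

(* A uniform lower bound for the escape probability: from y >= 0 the walk escapes to +oo
   at least as often as from 0, and from y <= 0 it escapes to -oo at least as often. *)
Definition escape_bound : R := Num.min (Pr P (A 0)) (Pr P (B 0)).

Lemma escape_bound_range : 0 < escape_bound <= 1.
Proof.
rewrite /escape_bound lt_min -!lte_fin -!(PrE P) ?A_pos ?B_pos ?ge_min;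
  [|exact: measurable_B|exact: measurable_A].
by rewrite -lee_fin -(PrE P (measurable_A 0)) probability_le1 //; exact: measurable_A.
Qed.

Lemma escape_bound_le y : (escape_bound%:E <= P (A y) + P (B y))%E.
Proof.
have [y0|y0] := leP 0 y.
  apply: le_trans (leeDl _ _) => //; apply: (@le_trans _ _ (P (A 0))).
    by rewrite (PrE P (measurable_A 0)) lee_fin ge_min lexx.
  by apply: le_measure; rewrite ?inE; [exact: measurable_A..|exact: event_pinfty_mono].
apply: le_trans (leeDr _ _) => //; apply: (@le_trans _ _ (P (B 0))).
  by rewrite (PrE P (measurable_B 0)) lee_fin ge_min lexx orbT.
rewrite !event_ninfty_mirror; apply: le_measure; rewrite ?inE; try exact: event_pinfty_measurable.
by apply: event_pinfty_mono; [exact: mirror_mono | rewrite oppr0 oppr_ge0 ltW].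
Qed.

(* By the Markov property, the bound transfers to every cylinder, and by countable
   additivity to every event determined by finitely many letters. *)
Lemma cylinder_escape_bound t z :
  (escape_bound%:E * P (cylinder xi t) <= P ((A z `|` B z) `&` cylinder xi t))%E.
Proof.
have mC := cylinder_measurable t xim.
rewrite setIC setIUr.
have -> : P ((cylinder xi t `&` A z) `|` (cylinder xi t `&` B z)) =
    (P (cylinder xi t `&` A z) + P (cylinder xi t `&` B z))%E.
  apply: measureU; [exact: measurableI (measurable_A z)|exact: measurableI (measurable_B z)|].
  rewrite setIACA event_pinfty_ninfty_disjoint; exact: setI0.
rewrite !event_ninfty_mirror !(markov_cylinder _ xim iid) run_mirror -!event_ninfty_mirror.
rewrite -ge0_muleDr // (measure_cylinder iid) [(_ * _)%E]muleC.
apply: lee_wpmul2l; first by rewrite lee_fin ltW // weight_gt0.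
exact: escape_bound_le.
Qed.

Lemma prefix_event_escape_bound n S z :
  (escape_bound%:E * P (prefix_event xi n S) <=
   P ((A z `|` B z) `&` prefix_event xi n S))%E.
Proof.
have mE := measurable_AB z.
rewrite -[prefix_event xi n S]setTI measure_prefix_event // setTI measure_prefix_event //.
rewrite -nneseriesZl; last by move=> k _; exact: measure_ge0.
apply: lee_nneseries => [k _ _|k _].
  by rewrite mule_ge0 // lee_fin ltW //; case/andP: escape_bound_range.
case: (prefix_pieceP Omega n S k) => [[s E]|E]; rewrite !E.
  by rewrite setTI cylinder_escape_bound.
by rewrite !setI0 measure0 mule0.
Qed.

(* The event of escaping neither way is approximable and sparse in every event determined
   by finitely many letters, hence null. *)
Theorem escape_dichotomy z : (P (A z) + P (B z) = 1)%E.
Proof.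
rewrite -measure_AB; set E := A z `|` B z.
have null : Pr P (~` E) = 0.
  apply: (approximable_null xim _ escape_bound_range) => [|n S].
    apply/approximableC/(approximableU xim); first exact: approximable_event_pinfty.
    rewrite event_ninfty_mirror; exact: approximable_event_pinfty.
  rewrite setDE setCK setIC -lee_fin EFinM -!(PrE P); last exact: prefix_event_measurable.
    exact: prefix_event_escape_bound.
  by apply: measurableI; [exact: measurable_AB | exact: prefix_event_measurable].
have := probability_setC P (measurable_AB z).
rewrite (PrE P (measurableC (measurable_AB z))) null (PrE P (measurable_AB z)) -EFinB.
by move=> [complement]; congr (_%:E); lra.
Qed.

End Dichotomy.

Theorem proposition2 (R : realType) (I : countType) (fs : I -> R -> R) (p : I -> R)
  (d : measure_display) (Omega : measurableType d) (P : probability Omega R)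
  (xi : nat -> Omega -> I) :
  injective fs ->
  (forall i, homeo_plus (fs i)) ->
  (forall i, 0 < p i) ->
  (\esum_(i in [set: I]) (p i)%:E = 1)%E ->
  (forall n i, measurable (xi n @^-1` [set i])) ->
  iid_law P p xi ->
  shiftable fs ->
  (exists x : R, (0 < P (event_pinfty fs xi x))%E) ->
  (exists y : R, (0 < P (event_ninfty fs xi y))%E) ->
  forall z : R, (P (event_pinfty fs xi z) + P (event_ninfty fs xi z) = 1)%E.
Proof.
move=> _ homeo p_gt0 _ xim iid shf pinfty_pos ninfty_pos z.
have fs_mono i : {homo fs i : a b / a <= b}.
  by case: (homeo i) => _ [_ incr] a b; rewrite le_eqVlt => /predU1P[->|/incr/ltW].
have fs_cont i : continuous (fs i) by case: (homeo i) => _ [].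
exact: (escape_dichotomy xim iid p_gt0 fs_mono fs_cont shf pinfty_pos ninfty_pos).
Qed.
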